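(* Let $(X,T)$ be a topologically transitive topological dynamical system, where $X$ is totally disconnected, and suppose every nonempty open subset of $X$ has positive measure for at least one $T$-invariant Borel probability measure. If $p,q$ are relatively prime positive integers such that $\theta=p/q\in(0,1)$ and $\exp(2\pi i\theta)$ is a continuous eigenvalue of $T$, then there exists a clopen set $U\subseteq X$ such that $q[1_U]=p[1_X]$ in $K^0(X,T)$.
   Context: A topological dynamical system is a compact metric space $X$ with a homeomorphism $T$; topologically transitive means some orbit is dense. A continuous eigenvalue is $\lambda$ with $f\circ T=\lambda f$ for some continuous $f:X\to\mathbb S^1$. $K^0(X,T)=C(X,\mathbb Z)/\{f-f\circ T:f\in C(X,\mathbb Z)\}$, $[f]$ the class of $f$. *)

From HB Require Import structures.
From mathcomp Require Import all_boot all_order all_algebra.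
From mathcomp Require Import all_classical all_reals all_analysis.
Set Implicit Arguments. Unset Strict Implicit. Unset Printing Implicit Defensive.
Import Order.TTheory GRing.Theory Num.Theory.
Import numFieldTopology.Exports numFieldNormedType.Exports.
Local Open Scope classical_set_scope.
Local Open Scope ring_scope.

Definition borelType (X : ptopologicalType) := g_sigma_algebraType (@open X).

Definition homeomorphism (X : topologicalType) (T Tinv : X -> X) : Prop :=
  [/\ continuous T, continuous Tinv, cancel T Tinv & cancel Tinv T].

Definition orbit (X : Type) (T Tinv : X -> X) (x : X) : set X :=
  [set y | exists n : nat, y = iter n T x \/ y = iter n Tinv x].

Definition top_transitive (X : topologicalType) (T Tinv : X -> X) : Prop :=
  exists x : X, dense (orbit T Tinv x).

Definition invariant_measure (R : realType) (X : ptopologicalType)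
    (T : X -> X) (mu : probability (borelType X) R) : Prop :=
  forall A : set (borelType X), measurable A -> mu (T @^-1` A) = mu A.

(* continuous functions X -> Z (Z discrete) = locally constant functions *)
Definition cont_int (X : topologicalType) (g : X -> int) : Prop :=
  forall x : X, \forall y \near x, g y = g x.

Definition coboundary (X : topologicalType) (T : X -> X) (h : X -> int) : Prop :=
  exists g : X -> int, cont_int g /\ forall x, h x = g x - g (T x).

(* [f1] = [f2] in K^0(X,T) = C(X,Z) / {g - g o T} *)
Definition K0_eq (X : topologicalType) (T : X -> X) (f1 f2 : X -> int) : Prop :=
  coboundary T (fun x => f1 x - f2 x).

(* lambda = exp(i a) (a real) is a continuous eigenvalue of T:
   there is a continuous f : X -> S^1 (S^1 as the unit circle in R^2 = C)
   with f (T x) = exp(i a) * f x (complex multiplication written out). *)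
Definition cont_eigenvalue (R : realType) (X : topologicalType) (T : X -> X)
    (a : R) : Prop :=
  exists f : X -> (R * R)%type, continuous f /\
    (forall x, (f x).1 ^+ 2 + (f x).2 ^+ 2 = 1) /\
    (forall x, f (T x) = (cos a * (f x).1 - sin a * (f x).2,
                          sin a * (f x).1 + cos a * (f x).2)).

(* An eigenfunction [f] for [exp(2 pi i p/q)] satisfies [f \o T = rho^p \o f],
   where [rho] is the rotation by [2 pi/q].  So [f] maps the orbit of a point
   [x0] into the finite set [{rho^k (f x0) | k < q}]; as the orbit is dense and
   finite sets of the plane are closed, this holds on all of [X], so [f] is
   locally constant.  Writing [f = rho^i (f x0)] with [i < q] defines a locally
   constant index [i] with [i \o T = i + p (mod q)], and for the clopen set
   [U = {i >= q - p}] one checks [q 1_U - p = i - i \o T]. *)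

From Pilot Require Import Defs.
From HB Require Import structures.
From mathcomp Require Import all_boot all_order all_algebra.
From mathcomp Require Import all_classical all_reals all_analysis.
From mathcomp Require Import ring lra zify.
Import Order.TTheory GRing.Theory Num.Theory.
Import numFieldTopology.Exports numFieldNormedType.Exports.
Local Open Scope classical_set_scope.
Local Open Scope ring_scope.

Section Rotation.
Variable R : realType.

Definition rot (t : R) (v : R * R) : R * R :=
  (cos t * v.1 - sin t * v.2, sin t * v.1 + cos t * v.2).

Definition sqnorm (v : R * R) : R := v.1 ^+ 2 + v.2 ^+ 2.

Lemma rot0 v : rot 0 v = v.
Proof. by case: v => a b; rewrite /rot cos0 sin0 /=; congr (_, _); ring. Qed.

Lemma rotD s t v : rot (s + t) v = rot s (rot t v).
Proof. by rewrite /rot cosD sinD /=; congr (_, _); ring. Qed.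

Lemma iter_rot t n v : iter n (rot t) v = rot (n%:R * t) v.
Proof.
elim: n => [|n IH]; first by rewrite mul0r rot0.
by rewrite iterS IH -rotD -natr1 mulrDl mul1r addrC.
Qed.

Lemma sqnorm_rot t v : sqnorm (rot t v) = sqnorm v.
Proof.
rewrite /sqnorm /rot /=.
have -> : (cos t * v.1 - sin t * v.2) ^+ 2 + (sin t * v.1 + cos t * v.2) ^+ 2
  = (cos t ^+ 2 + sin t ^+ 2) * (v.1 ^+ 2 + v.2 ^+ 2) by ring.
by rewrite cos2Dsin2 mul1r.
Qed.

(* the inner product of v and rot t v is cos t * sqnorm v *)
Lemma rot_fixed_cos t v : sqnorm v = 1 -> rot t v = v -> cos t = 1.
Proof.
case: v => a b; rewrite /sqnorm /rot /= => v1 [e1 e2].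
have h : cos t * (a ^+ 2 + b ^+ 2) =
  a * (cos t * a - sin t * b) + b * (sin t * a + cos t * b) by ring.
by rewrite e1 e2 v1 mulr1 in h; rewrite h -v1; ring.
Qed.

Lemma cos_2pi_frac_neq1 (m q : nat) : (0 < m < q)%N ->
  cos (m%:R * (2 * pi / q%:R)) != 1 :> R.
Proof.
case/andP=> m_gt0 mq; apply/eqP => h.
have q_gt0 : (0 : R) < q%:R by rewrite ltr0n; lia.
pose w : R := pi / q%:R.
have w_gt0 : 0 < w by rewrite divr_gt0 // pi_gt0.
have qw : w * q%:R = pi by rewrite /w mulfVK // gt_eqF.
have e : m%:R * (2 * pi / q%:R) = m%:R * w + m%:R * w by rewrite /w; ring.
rewrite e cosD -!expr2 cos2sin2 in h.
have sin2_0 : sin (m%:R * w) ^+ 2 = 0 by lra.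
have : 0 < sin (m%:R * w).
  apply: sin_gt0_pi; apply/andP; split; first by rewrite mulr_gt0 // ltr0n.
  by rewrite -qw mulrC ltr_pM2l // ltr_nat.
by move/eqP: sin2_0; rewrite expf_eq0 /= => /eqP ->; rewrite ltxx.
Qed.

Variable q : nat.
Hypothesis q_gt0 : (0 < q)%N.
Let rho := rot (2 * pi / q%:R).

Lemma iter_rot_period v : iter q rho v = v.
Proof.
have q0 : (q%:R : R) != 0 by rewrite pnatr_eq0 -lt0n.
rewrite iter_rot (_ : _ * _ = pi *+ 2); last by rewrite mulrC mulfVK // mulr_natl.
by case: v => a b; rewrite /rot cos2pi sin2pi /=; congr (_, _); ring.
Qed.

Lemma iter_rot_inj v j k : sqnorm v = 1 -> (j < q)%N -> (k < q)%N ->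
  iter j rho v = iter k rho v -> j = k.
Proof.
move=> v1 jq kq e.
have lt_neq j' k' : (j' < k' < q)%N -> iter j' rho v <> iter k' rho v.
  move=> /andP[jk' kq'] e'.
  have kj : (0 < k' - j' < q)%N by apply/andP; split; lia.
  move/eqP: (@cos_2pi_frac_neq1 _ _ kj); apply.
  apply: (@rot_fixed_cos _ (iter j' rho v)); first by rewrite iter_rot sqnorm_rot.
  by rewrite -iter_rot -iterD subnK ?(ltnW jk') // e'.
case: (ltngtP j k) => // h.
- by case: (lt_neq j k); rewrite ?h.
- by case: (lt_neq k j); rewrite ?h.
Qed.

End Rotation.
Arguments rot {R}.
Arguments sqnorm {R}.

Lemma iter_modn (A : Type) (g : A -> A) (q : nat) :
  (forall v, iter q g v = v) -> forall n v, iter n g v = iter (n %% q) g v.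
Proof.
move=> gq n v; rewrite {1}(divn_eq n q) iterD.
suff -> : forall k w, iter (k * q) g w = w by [].
by elim=> [|k IH] w //; rewrite mulSn iterD IH gq.
Qed.

Definition locally_constant {X : topologicalType} {Y : Type} (f : X -> Y) :=
  forall x, \forall z \near x, f z = f x.

Lemma dense_closed_setT {X : topologicalType} {D C : set X} :
  dense D -> closed C -> D `<=` C -> C = setT.
Proof.
move=> dD cC DC; apply/seteqP; split=> // x _; apply: contrapT => Cx.
have [z [Cz Dz]] : ~` C `&` D !=set0 by apply: dD; [exists x | exact: closed_openC].
exact/Cz/DC.
Qed.

Lemma finite_range_locally_constant {X Y : topologicalType} (f : X -> Y) :
  accessible_space Y -> continuous f -> finite_set (range f) ->
  locally_constant f.
Proof.
move=> T1 fc fin x.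
have cF : closed (range f `\ f x).
  exact: (accessible_finite_set_closed.1 T1 _ (finite_setD [set f x] fin)).
have Ox : open_nbhs x (f @^-1` ~` (range f `\ f x)).
  by split; [exact: open_comp (fun y _ => fc y) (closed_openC cF) | move=> [_ []]].
apply: filterS (open_nbhs_nbhs Ox) => z /= nz; apply: contrapT => ne.
exact: nz (conj (imageT f z) ne).
Qed.

Lemma locally_constant_clopen {X : topologicalType} {Y : Type} {i : X -> Y}
    (P : Y -> Prop) :
  locally_constant i -> clopen [set x | P (i x)].
Proof.
have open_level (Q : Y -> Prop) : locally_constant i -> open [set x | Q (i x)].
  move=> ilc; rewrite openE => x Qx; rewrite /interior /=.
  by apply: filterS (ilc x) => z /= ->.
move=> ilc; split; first exact: open_level.
rewrite -(setCK [set x | P (i x)]); apply: open_closedC.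
exact: (open_level (fun y => ~ P y)).
Qed.

Lemma K0_eq_rotation_index {X : topologicalType} (T : X -> X) (i : X -> nat)
    (p q : nat) :
  (p <= q)%N -> locally_constant i -> (forall x, i x < q)%N ->
  (forall x, i (T x) = (i x + p) %% q)%N ->
  K0_eq T (fun x => q%:Z * indic [set x | (q - p <= i x)%N] x)
          (fun x => p%:Z * indic [set: X] x).
Proof.
move=> pq ilc iq iT; exists (fun x => (i x)%:Z); split.
  by move=> x; apply: filterS (ilc x) => z /= ->.
move=> x; rewrite /indic in_setT iT; have := iq x.
case: (pselect (q - p <= i x)%N) => U_x ix_q.
- rewrite (mem_set (A := [set x | (q - p <= i x)%N]) U_x) /=.
  have -> : ((i x + p) %% q = i x + p - q)%N.
    by rewrite -{1}(@subnK q (i x + p)) ?modnDr ?modn_small //; lia.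
  lia.
- rewrite (memNset (A := [set x | (q - p <= i x)%N]) U_x) /=.
  by rewrite modn_small //; lia.
Qed.

Section RationalEigenfunction.
Context {R : realType} {X : topologicalType} {T Tinv : X -> X} {p q : nat}.
Context {f : X -> R * R}.
Hypotheses (TinvK : cancel Tinv T) (q_gt0 : (0 < q)%N).
Let rho := @rot R (2 * pi / q%:R).
Hypotheses (f_cont : continuous f) (f_unit : forall x, sqnorm (f x) = 1).
Hypothesis fT : forall x, f (T x) = iter p rho (f x).

Let rho_modn n v : iter n rho v = iter (n %% q) rho v.
Proof. exact: iter_modn (@iter_rot_period R q q_gt0) n v. Qed.

Lemma eigen_Tinv x : f (Tinv x) = iter ((q - 1) * p) rho (f x).
Proof.
have := fT (Tinv x); rewrite TinvK => ->.
rewrite -iterD rho_modn.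
by rewrite (_ : _ + p = p * q)%N ?modnMl //; nia.
Qed.

Lemma eigen_orbit x :
  Defs.orbit T Tinv x `<=` f @^-1` [set iter k rho (f x) | k in `I_q].
Proof.
have iter_eigen (g : X -> X) m : (forall y, f (g y) = iter m rho (f y)) ->
    forall n, f (iter n g x) = iter (n * m) rho (f x).
  by move=> fg; elim=> [|n IH] //=; rewrite fg IH -iterD -mulSn.
have in_rho_orbit n : [set iter k rho (f x) | k in `I_q] (iter n rho (f x)).
  exists (n %% q)%N; first by rewrite /= ltn_pmod.
  by rewrite -rho_modn.
move=> _ [n [->|->]] /=.
- by rewrite (iter_eigen T p fT); apply: in_rho_orbit.
- by rewrite (iter_eigen Tinv _ eigen_Tinv); apply: in_rho_orbit.
Qed.

Context {x0 : X}.
Hypothesis x0_dense : dense (Defs.orbit T Tinv x0).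
Let c := f x0.

Let plane_accessible : accessible_space (R * R)%type :=
  hausdorff_accessible (@norm_hausdorff _ _).

Let rho_inj j k : (j < q)%N -> (k < q)%N -> iter j rho c = iter k rho c -> j = k.
Proof. exact: (@iter_rot_inj R q q_gt0 c j k (f_unit x0)). Qed.

(* [f] maps the dense orbit into a finite, hence closed, set *)
Lemma eigen_range : range f `<=` [set iter k rho c | k in `I_q].
Proof.
have cF : closed [set iter k rho c | k in `I_q].
  exact: accessible_finite_set_closed.1 plane_accessible _ (finite_image _ (finite_II q)).
have fF := dense_closed_setT x0_dense (preimage_closed (fun y _ => f_cont y) cF)
  (@eigen_orbit x0).
move=> _ [x _ <-].
by suff : (f @^-1` [set iter k rho c | k in `I_q]) x; last rewrite fF.
Qed.

Lemma eigen_locally_constant : locally_constant f.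
Proof.
apply: finite_range_locally_constant plane_accessible f_cont _.
exact: sub_finite_set eigen_range (finite_image _ (finite_II q)).
Qed.

Lemma eigen_index : exists i : X -> nat,
  [/\ locally_constant i, forall x, (i x < q)%N &
      forall x, i (T x) = ((i x + p) %% q)%N].
Proof.
have /choice [i fi] : forall x, exists k, (k < q)%N /\ f x = iter k rho c.
  by move=> x; have [k kq <-] := eigen_range _ (imageT f x); exists k.
have i_inj x y : f x = f y -> i x = i y.
  by move=> fxy; apply: rho_inj (fi x).1 (fi y).1 _; rewrite -(fi x).2 -(fi y).2.
exists i; split=> [x|x|x]; first by apply: filterS (eigen_locally_constant x) => z /i_inj.
- exact: (fi x).1.
- apply: rho_inj (fi (T x)).1 (ltn_pmod _ q_gt0) _.
  rewrite -(fi (T x)).2 fT (fi x).2 -iterD addnC.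
  exact: rho_modn.
Qed.

End RationalEigenfunction.

Theorem mainTheorem7 (R : realType) (X : pseudoPMetricType R) (T Tinv : X -> X)
  (p q : nat) :
  hausdorff_space X ->
  compact [set: X] ->
  homeomorphism T Tinv ->
  top_transitive T Tinv ->
  totally_disconnected [set: X] ->
  (forall O : set X, open O -> O !=set0 ->
     exists mu : probability (borelType X) R,
       invariant_measure T mu /\ (0 < mu O)%E) ->
  (0 < p)%N -> (0 < q)%N -> coprime p q -> (p < q)%N ->
  cont_eigenvalue T (2 * pi * (p%:R / q%:R) : R) ->
  exists U : set X, clopen U /\
    K0_eq T (fun x => q%:Z * indic U x) (fun x => p%:Z * indic [set: X] x).
Proof.
move=> _ _ [_ _ _ TinvK] [x0 x0_dense] _ _ _ q_gt0 _ pq [f [f_cont [f_unit fe]]].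
have fT x : f (T x) = iter p (rot (2 * pi / q%:R)) (f x).
  by rewrite iter_rot (_ : _ * _ = 2 * pi * (p%:R / q%:R)); [exact: fe | ring].
have [i [ilc iq iT]] := eigen_index TinvK q_gt0 f_cont f_unit fT x0_dense.
exists [set x | (q - p <= i x)%N]; split.
  exact: (locally_constant_clopen (fun n => q - p <= n)%N ilc).
exact: K0_eq_rotation_index (ltnW pq) ilc iq iT.
Qed.
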